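(* Define the relation $\succeq^5$ on $\mathcal{A}$ by $\mathbf{A}\succeq^5\mathbf{B}\iff\nu(\mathbf{A})\le\nu(\mathbf{B})$, where for $\mathbf{A}=[a_{ij}]$ of size $n$, $\nu(\mathbf{A})=\min_{1\le i<j<k\le n}\max\{a_{ij}a_{jk}/a_{ik},\ a_{ik}/(a_{ij}a_{jk})\}$. Then $\succeq^5$ is an inconsistency ranking that satisfies PR, IIP, HTE, SI and RED, but does not satisfy MON.
   Context: A pairwise comparison matrix of size $n$ is a matrix $\mathbf{A}=[a_{ij}]\in\mathbb{R}^{n\times n}$ with all entries positive and $a_{ji}=1/a_{ij}$ for all $i,j$. Let $\mathcal{A}$ denote the set of all pairwise comparison matrices of all sizes $n\ge 3$. For $\mathbf{A}\in\mathcal{A}$ of size $n$ and $3\le m\le n$, a submatrix of $\mathbf{A}$ is a matrix $\mathbf{B}=[b_{ij}]$ of size $m$ with $b_{ij}=a_{\sigma(i)\sigma(j)}$ for some strictly increasing map $\sigma:\{1,\dots,m\}\to\{1,\dots,n\}$. A triad is a pairwise comparison matrix of size $3$; a triad of $\mathbf{A}$ is a submatrix of $\mathbf{A}$ of size $3$ (when $n=3$, $\mathbf{A}$ is its own unique triad). A triad $\mathbf{T}$ is written $\mathbf{T}=(t_1;t_2;t_3)$, meaning $t_{12}=t_1$, $t_{13}=t_2$, $t_{23}=t_3$ (the remaining entries are determined by reciprocity); $\mathbf{T}^\top$ denotes its transpose, i.e. the triad $(1/t_1;1/t_2;1/t_3)$. An inconsistency ranking is a complete and transitive binary relation $\succeq$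 on $\mathcal{A}$; $\mathbf{A}\sim\mathbf{B}$ means $\mathbf{A}\succeq\mathbf{B}$ and $\mathbf{B}\succeq\mathbf{A}$; $\mathbf{A}\preceq\mathbf{B}$ means $\mathbf{B}\succeq\mathbf{A}$. Properties of an inconsistency ranking $\succeq$: (PR) for all $s_2,t_2\ge 1$: $(1;s_2;1)\succeq(1;t_2;1)\iff s_2\le t_2$. (IIP) $\mathbf{T}\sim\mathbf{T}^\top$ for every triad $\mathbf{T}$. (HTE) $(1;t_2;t_3)\sim(1;t_2/t_3;1)$ for all $t_2,t_3>0$. (SI) $(t_1;t_2;t_3)\sim(kt_1;k^2t_2;kt_3)$ for all $t_1,t_2,t_3>0$ and all $k>0$. (MON) $\mathbf{A}\preceq\mathbf{T}$ for every $\mathbf{A}\in\mathcal{A}$ and every triad $\mathbf{T}$ of $\mathbf{A}$. (RED) every $\mathbf{A}\in\mathcal{A}$ has a triad $\mathbf{T}$ with $\mathbf{A}\sim\mathbf{T}$. *)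

From Stdlib Require Import Reals Lra Lia List.
Import ListNotations.
Open Scope R_scope.

(* A pairwise comparison matrix of size n >= 3, entries indexed by 0..n-1
   (values outside the index range are irrelevant junk). *)
Record PCM := mkPCM {
  size : nat;
  entry : nat -> nat -> R;
  size_ge3 : (3 <= size)%nat;
  entry_pos : forall i j, (i < size)%nat -> (j < size)%nat -> 0 < entry i j;
  entry_recip : forall i j, (i < size)%nat -> (j < size)%nat ->
                  entry j i = / entry i j
}.

Definition submatrix (B A : PCM) : Prop :=
  (size B <= size A)%nat /\
  exists sigma : nat -> nat,
    (forall i j, (i < j)%nat -> (j < size B)%nat -> (sigma i < sigma j)%nat) /\
    (forall i, (i < size B)%nat -> (sigma i < size A)%nat) /\
    (forall i j, (i < size B)%nat -> (j < size B)%nat ->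
       entry B i j = entry A (sigma i) (sigma j)).

Definition triad_of (T A : PCM) : Prop := size T = 3%nat /\ submatrix T A.

Definition is_triad (T : PCM) (t1 t2 t3 : R) : Prop :=
  size T = 3%nat /\ entry T 0 1 = t1 /\ entry T 0 2 = t2 /\ entry T 1 2 = t3.

Definition is_transpose (T' T : PCM) : Prop :=
  size T = 3%nat /\ size T' = 3%nat /\
  forall i j, (i < 3)%nat -> (j < 3)%nat -> entry T' i j = entry T j i.

Definition triples (n : nat) : list (nat * nat * nat) :=
  flat_map (fun i =>
    flat_map (fun j =>
      map (fun k => (i, j, k)) (seq (S j) (n - S j)))
    (seq (S i) (n - S i)))
  (seq 0 n).

Definition tri_incons (A : PCM) (t : nat * nat * nat) : R :=
  let '(i, j, k) := t in
  Rmax (entry A i j * entry A j k / entry A i k)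
       (entry A i k / (entry A i j * entry A j k)).

(* nu(A) = min over i<j<k of max{a_ij a_jk / a_ik, a_ik / (a_ij a_jk)};
   the list is nonempty (n >= 3) and contains (0,1,2), which is used as
   the initial value of the fold, so this is exactly the minimum. *)
Definition nu (A : PCM) : R :=
  fold_right (fun t acc => Rmin (tri_incons A t) acc)
             (tri_incons A (0%nat, 1%nat, 2%nat)) (triples (size A)).

Definition ge5 (A B : PCM) : Prop := nu A <= nu B.

Definition sim (Rel : PCM -> PCM -> Prop) (A B : PCM) : Prop := Rel A B /\ Rel B A.

Definition inconsistency_ranking (Rel : PCM -> PCM -> Prop) : Prop :=
  (forall A B, Rel A B \/ Rel B A) /\
  (forall A B C, Rel A B -> Rel B C -> Rel A C).

Definition PR (Rel : PCM -> PCM -> Prop) : Prop :=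
  forall (s2 t2 : R) (S T : PCM), 1 <= s2 -> 1 <= t2 ->
    is_triad S 1 s2 1 -> is_triad T 1 t2 1 -> (Rel S T <-> s2 <= t2).

Definition IIP (Rel : PCM -> PCM -> Prop) : Prop :=
  forall T T' : PCM, is_transpose T' T -> sim Rel T T'.

Definition HTE (Rel : PCM -> PCM -> Prop) : Prop :=
  forall (t2 t3 : R) (T S : PCM), 0 < t2 -> 0 < t3 ->
    is_triad T 1 t2 t3 -> is_triad S 1 (t2 / t3) 1 -> sim Rel T S.

Definition SI (Rel : PCM -> PCM -> Prop) : Prop :=
  forall (t1 t2 t3 k : R) (T S : PCM), 0 < t1 -> 0 < t2 -> 0 < t3 -> 0 < k ->
    is_triad T t1 t2 t3 -> is_triad S (k * t1) (k ^ 2 * t2) (k * t3) ->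
    sim Rel T S.

(* MON: A ⪯ T, i.e. T ⪰ A, for every triad T of A *)
Definition MON (Rel : PCM -> PCM -> Prop) : Prop :=
  forall A T : PCM, triad_of T A -> Rel T A.

Definition RED (Rel : PCM -> PCM -> Prop) : Prop :=
  forall A : PCM, exists T : PCM, triad_of T A /\ sim Rel A T.

(* Every quantity the ranking sees is the deviation max(x, 1/x) of a
   triad's ratio x = a_ij a_jk / a_ik from 1.  On a single triad this
   deviation is unchanged by transposition (x becomes 1/x), by the scaling
   of SI and by the exchange of HTE (x is invariant), and it equals t2 on
   (1; t2; 1), which gives PR, IIP, HTE and SI.  Since nu is a minimum over
   triads, it is attained at some triad, which is RED.  Being a minimum, it
   can also be strictly smaller than the value of a particular triad: in the
   4x4 matrix with a_14 = 2 and all other upper entries 1, the triad (1,2,3)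
   is consistent, so nu = 1, while the triad (1,2,4) has value 2; this
   breaks MON. *)
From Stdlib Require Import Reals Lra Lia List.
Open Scope R_scope.

Definition dev (x : R) : R := Rmax x (/ x).

Lemma dev_inv (x : R) : dev (/ x) = dev x.
Proof. unfold dev. rewrite Rinv_inv. apply Rmax_comm. Qed.

Lemma dev_ge1 (x : R) : 1 <= x -> dev x = x.
Proof.
  intros Hx. apply Rmax_left.
  assert (/ x <= / 1) by (apply Rinv_le_contravar; lra).
  rewrite Rinv_1 in *. lra.
Qed.

Lemma tri_incons_dev (A : PCM) (i j k : nat) :
  tri_incons A (i, j, k) = dev (entry A i j * entry A j k / entry A i k).
Proof. unfold tri_incons, dev. now rewrite Rinv_div. Qed.

(* For size 3 the only triple is (0,1,2), which is also the initial value of the fold. *)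
Lemma nu_size3 (T : PCM) : size T = 3%nat -> nu T = tri_incons T (0, 1, 2)%nat.
Proof. intros H. unfold nu. rewrite H. simpl. apply Rmin_left. lra. Qed.

Lemma nu_triad (T : PCM) (a b c : R) : is_triad T a b c -> nu T = dev (a * c / b).
Proof.
  intros [Hs [Hab [Hac Hbc]]].
  rewrite nu_size3, tri_incons_dev by exact Hs. now rewrite Hab, Hac, Hbc.
Qed.

Lemma nu_transpose (T' T : PCM) : is_transpose T' T -> nu T' = nu T.
Proof.
  intros [HT [HT' Htr]].
  rewrite (nu_size3 T'), (nu_size3 T), !tri_incons_dev by assumption.
  rewrite !Htr by lia.
  rewrite (entry_recip T 0 1), (entry_recip T 1 2), (entry_recip T 0 2) by lia.
  unfold Rdiv. rewrite <- !Rinv_mult. apply dev_inv.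
Qed.

Lemma fold_Rmin_le_init (f : nat * nat * nat -> R) (init : R) (l : list (nat * nat * nat)) :
  fold_right (fun t acc => Rmin (f t) acc) init l <= init.
Proof.
  induction l as [|t l IH]; simpl; [lra|].
  eapply Rle_trans; [apply Rmin_r | exact IH].
Qed.

Lemma fold_Rmin_attained (f : nat * nat * nat -> R) (init : R) (l : list (nat * nat * nat)) :
  fold_right (fun t acc => Rmin (f t) acc) init l = init \/
  exists t, In t l /\ fold_right (fun t acc => Rmin (f t) acc) init l = f t.
Proof.
  induction l as [|t l IH]; simpl; [now left|].
  apply Rmin_case; [right; exists t; auto|].
  destruct IH as [E | [t' [Hin E]]]; [now left | right; exists t'; auto].
Qed.

Lemma in_triples (n i j k : nat) : In (i, j, k) (triples n) -> (i < j < k /\ k < n)%nat.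
Proof.
  unfold triples; intros H.
  apply in_flat_map in H as [i' [Hi' H]].
  apply in_flat_map in H as [j' [Hj' H]].
  apply in_map_iff in H as [k' [E Hk']]. inversion E; subst.
  apply in_seq in Hi'. apply in_seq in Hj'. apply in_seq in Hk'. lia.
Qed.

Lemma nu_le_tri_incons_012 (A : PCM) : nu A <= tri_incons A (0, 1, 2)%nat.
Proof. apply fold_Rmin_le_init. Qed.

Lemma nu_attained (A : PCM) :
  exists i j k, (i < j < k /\ k < size A)%nat /\ nu A = tri_incons A (i, j, k).
Proof.
  destruct (fold_Rmin_attained (tri_incons A) (tri_incons A (0, 1, 2)%nat) (triples (size A)))
    as [E | [[[i j] k] [Hin E]]].
  - pose proof (size_ge3 A). exists 0%nat, 1%nat, 2%nat. split; [lia | exact E].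
  - exists i, j, k. split; [exact (in_triples _ _ _ _ Hin) | exact E].
Qed.

Definition pick3 (i j k a : nat) : nat :=
  match a with 0%nat => i | 1%nat => j | _ => k end.

Lemma pick3_lt (i j k n a : nat) : (i < j < k /\ k < n)%nat -> (pick3 i j k a < n)%nat.
Proof. intros; destruct a as [|[|]]; simpl; lia. Qed.

Definition subtriad (A : PCM) (i j k : nat) (H : (i < j < k /\ k < size A)%nat) : PCM :=
  mkPCM 3 (fun a b => entry A (pick3 i j k a) (pick3 i j k b)) (le_n 3)
    (fun a b _ _ => entry_pos A _ _ (pick3_lt _ _ _ _ a H) (pick3_lt _ _ _ _ b H))
    (fun a b _ _ => entry_recip A _ _ (pick3_lt _ _ _ _ a H) (pick3_lt _ _ _ _ b H)).

Lemma subtriad_triad_of (A : PCM) (i j k : nat) (H : (i < j < k /\ k < size A)%nat) :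
  triad_of (subtriad A i j k H) A.
Proof.
  split; [reflexivity|]. split; [simpl; apply size_ge3|].
  exists (pick3 i j k). split; [|split].
  - simpl. intros a b Hab Hb.
    destruct a as [|[|]]; destruct b as [|[|[|]]]; simpl; lia.
  - intros a _. exact (pick3_lt _ _ _ _ a H).
  - reflexivity.
Qed.

Lemma exists_triad_of_tri_incons (A : PCM) (i j k : nat) :
  (i < j < k /\ k < size A)%nat ->
  exists T, triad_of T A /\ nu T = tri_incons A (i, j, k).
Proof.
  intros H. exists (subtriad A i j k H). split.
  - apply subtriad_triad_of.
  - now rewrite nu_size3.
Qed.

Lemma ge5_inconsistency_ranking : inconsistency_ranking ge5.
Proof.
  unfold ge5. split.
  - intros A B. destruct (Rle_dec (nu A) (nu B)); [left | right]; lra.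
  - intros A B C. lra.
Qed.

Lemma ge5_PR : PR ge5.
Proof.
  intros s t S T Hs Ht HS HT. unfold ge5.
  rewrite (nu_triad _ _ _ _ HS), (nu_triad _ _ _ _ HT).
  replace (1 * 1 / s) with (/ s) by (field; lra).
  replace (1 * 1 / t) with (/ t) by (field; lra).
  rewrite !dev_inv, !dev_ge1 by assumption. reflexivity.
Qed.

Lemma ge5_IIP : IIP ge5.
Proof.
  intros T T' Htr. unfold sim, ge5. rewrite (nu_transpose _ _ Htr). lra.
Qed.

Lemma ge5_HTE : HTE ge5.
Proof.
  intros t2 t3 T S H2 H3 HT HS. unfold sim, ge5.
  rewrite (nu_triad _ _ _ _ HT), (nu_triad _ _ _ _ HS).
  replace (1 * 1 / (t2 / t3)) with (1 * t3 / t2) by (field; lra). lra.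
Qed.

Lemma ge5_SI : SI ge5.
Proof.
  intros t1 t2 t3 k T S H1 H2 H3 Hk HT HS. unfold sim, ge5.
  rewrite (nu_triad _ _ _ _ HT), (nu_triad _ _ _ _ HS).
  replace (k * t1 * (k * t3) / (k ^ 2 * t2)) with (t1 * t3 / t2) by (field; lra). lra.
Qed.

Lemma ge5_RED : RED ge5.
Proof.
  intros A. destruct (nu_attained A) as [i [j [k [H E]]]].
  destruct (exists_triad_of_tri_incons A i j k H) as [T [HT ET]].
  exists T. split; [exact HT|]. unfold sim, ge5. lra.
Qed.

Definition counterexample_entry (i j : nat) : R :=
  match i, j with
  | 0%nat, 3%nat => 2
  | 3%nat, 0%nat => / 2
  | _, _ => 1
  end.

Definition counterexample : PCM.
Proof.
  refine (mkPCM 4 counterexample_entry _ _ _).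
  - lia.
  - intros i j _ _.
    destruct i as [|[|[|[|]]]]; destruct j as [|[|[|[|]]]]; simpl; lra.
  - intros i j Hi Hj.
    destruct i as [|[|[|[|]]]]; try lia; destruct j as [|[|[|[|]]]]; try lia;
      simpl; field.
Defined.

Lemma ge5_not_MON : ~ MON ge5.
Proof.
  intros mon.
  destruct (exists_triad_of_tri_incons counterexample 0 1 3) as [T [HT ET]];
    [simpl; lia|].
  pose proof (mon _ _ HT) as HTA. unfold ge5 in HTA.
  pose proof (nu_le_tri_incons_012 counterexample) as Hnu.
  rewrite ET, tri_incons_dev in HTA. rewrite tri_incons_dev in Hnu. simpl in HTA, Hnu.
  replace (1 * 1 / 2) with (/ 2) in HTA by field.
  replace (1 * 1 / 1) with 1 in Hnu by field.
  rewrite dev_inv, dev_ge1 in HTA by lra. rewrite dev_ge1 in Hnu by lra. lra.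
Qed.

Theorem mainTheorem6 :
  inconsistency_ranking ge5 /\ PR ge5 /\ IIP ge5 /\ HTE ge5 /\ SI ge5 /\
  RED ge5 /\ ~ MON ge5.
Proof.
  exact (conj ge5_inconsistency_ranking (conj ge5_PR (conj ge5_IIP (conj ge5_HTE
          (conj ge5_SI (conj ge5_RED ge5_not_MON)))))).
Qed.
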